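(* Let $n\ge1$. The distributive skeleton functor $\mathfrak S\colon\mathsf{PMV}_n\to\mathsf{DL}$ is dual to the forgetful functor $\mathsf U\colon\mathcal X_n\to\mathsf{Priest}$. That is, there is a natural isomorphism $$D\circ\mathfrak S\cong\mathsf U\circ D_n.$$ Its component at $\mathbf A$ is the order-isomorphism and homeomorphism $$\mathsf{PMV}_n(\mathbf A,\mathbf{P\L}_n)\to\mathsf{DL}(\mathfrak S(\mathbf A),\mathbf 2),\qquad u\mapsto u|_{\mathfrak S(\mathbf A)}.$$
   Context: For $n\ge 1$, the algebra $\mathbf{P\L}_n=\langle\{0,\tfrac1n,\dots,1\},\min,\max,\odot,\oplus,0,1\rangle$ has $x\odot y=\max\{0,x+y-1\}$ and $x\oplus y=\min\{1,x+y\}$. $\mathsf{PMV}_n$ is the variety it generates. - $\mathcal S_n$ is the set of subalgebras $\mathbf R$ of $\mathbf{P\L}_n^2$ with $\{(x,y):x=0\text{ or }y=1\}\subseteq\mathbf R\subseteq\{(x,y):x\le y\}$. - $\mathcal X_n$ is the category of topological structures isomorphic to closed substructures of nonempty powers of $\langle\{0,\tfrac1n,\dots,1\},\mathcal S_n,\text{discrete}\rangle$, with continuous relation-preserving maps as morphisms. - $D_n\colon\mathsf{PMV}_n\to\mathcal X_n$ sends $\mathbf A$ to $\mathsf{PMV}_n(\mathbf A,\mathbf{P\L}_n)$ with pointwise relations and the subspace topology of the product topology. On morphisms it acts by precomposition. - $\mathsf{DL}$ is the category of bounded distributive lattices and $\mathsf{Priest}$ the category of Priestley spaces. - $D\colon\mathsf{DL}\to\mathsf{Priest}$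 is Priestley duality: $D(\mathbf L)=\mathsf{DL}(\mathbf L,\mathbf 2)$ with pointwise order and product topology, where $\mathbf 2$ is the two-element lattice. - Every $\mathbf X\in\mathcal X_n$ has an underlying Priestley space $\langle X,\le^{\mathbf X},\mathcal T\rangle$. The functor $\mathsf U$ sends $\mathbf X$ to this space and each morphism to itself. - The distributive skeleton of $\mathbf A\in\mathsf{PMV}_n$ is the bounded distributive lattice $\mathfrak S(\mathbf A)=\langle\{a\in A:a\oplus a=a\},\wedge,\vee,0,1\rangle$. On a homomorphism $h$, $\mathfrak S h=h|_{\mathfrak S(\mathbf A)}$. *)

From HB Require Import structures.
From mathcomp Require Import all_boot all_order all_algebra.
From mathcomp Require Import all_classical all_reals all_analysis.

Set Implicit Arguments.
Unset Strict Implicit.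
Unset Printing Implicit Defensive.

Local Open Scope classical_set_scope.

Record pmvSig := PmvSig {
  car :> Type;
  pmin : car -> car -> car;
  pmax : car -> car -> car;
  podot : car -> car -> car;
  poplus : car -> car -> car;
  pzero : car;
  pone : car }.

(* The algebra PL_n: the element k : 'I_n.+1 stands for k/n. *)
Definition PL (n : nat) : pmvSig :=
  @PmvSig 'I_n.+1
    (fun k l => inord (minn k l))
    (fun k l => inord (maxn k l))
    (fun k l => inord ((k + l) - n))      (* max{0, x+y-1} *)
    (fun k l => inord (minn n (k + l)))   (* min{1, x+y}   *)
    (inord 0) (inord n).

Inductive term :=
  | tVar of nat
  | tMin of term & term
  | tMax of term & term
  | tOdot of term & term
  | tOplus of term & term
  | tZero
  | tOne.

Fixpoint eval (A : pmvSig) (e : nat -> A) (t : term) : A :=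
  match t with
  | tVar i => e i
  | tMin s u => pmin (eval e s) (eval e u)
  | tMax s u => pmax (eval e s) (eval e u)
  | tOdot s u => podot (eval e s) (eval e u)
  | tOplus s u => poplus (eval e s) (eval e u)
  | tZero => pzero A
  | tOne => pone A
  end.

(* A belongs to the variety PMV_n generated by PL_n (= the class of models of
   all identities valid in PL_n, by Birkhoff's HSP theorem). *)
Definition in_PMV (n : nat) (A : pmvSig) : Prop :=
  forall s t : term,
    (forall e : nat -> PL n, eval e s = eval e t) ->
    forall e : nat -> A, eval e s = eval e t.

Definition is_hom (A B : pmvSig) (h : A -> B) : Prop :=
  (forall x y, h (pmin x y) = pmin (h x) (h y)) /\
  (forall x y, h (pmax x y) = pmax (h x) (h y)) /\
  (forall x y, h (podot x y) = podot (h x) (h y)) /\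
  (forall x y, h (poplus x y) = poplus (h x) (h y)) /\
  h (pzero A) = pzero B /\
  h (pone A) = pone B.

(* Carrier of the distributive skeleton S(A): the oplus-idempotents. *)
Definition skel (A : pmvSig) : Type := {a : A | poplus a a = a}.

Definition is_DLhom (A : pmvSig) (f : skel A -> bool) : Prop :=
  [/\ forall x y z : skel A, sval z = pmin (sval x) (sval y) -> f z = f x && f y,
      forall x y z : skel A, sval z = pmax (sval x) (sval y) -> f z = f x || f y,
      forall z : skel A, sval z = pzero A -> f z = false
    & forall z : skel A, sval z = pone A -> f z = true].

Definition DnSpace (n : nat) (A : pmvSig) : topologicalType :=
  {ptws A -> discrete_topology 'I_n.+1}.

Definition DSpace (A : pmvSig) : topologicalType :=
  {ptws skel A -> discrete_topology bool}.

Definition Dn (n : nat) (A : pmvSig) : set (DnSpace n A) :=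
  [set u | @is_hom A (PL n) u].

Definition DS (A : pmvSig) : set (DSpace A) := [set f | is_DLhom f].

(* The component u |-> u restricted to S(A), reading the value 1 of PL_n as
   true and 0 as false (the subalgebra {0,1} of PL_n is identified with 2). *)
Definition restr (n : nat) (A : pmvSig) (u : DnSpace n A) : DSpace A :=
  fun s : skel A => (u (sval s) : 'I_n.+1) == ord_max.

Definition leDn (n : nat) (A : pmvSig) (u v : DnSpace n A) : Prop :=
  forall a : A, ((u a : 'I_n.+1) <= (v a : 'I_n.+1))%N.
Definition leDS (A : pmvSig) (f g : DSpace A) : Prop :=
  forall s : skel A, f s ==> g s.

Arguments Dn : clear implicits.
Arguments DS : clear implicits.
Arguments restr : clear implicits.
Arguments leDn : clear implicits.
Arguments leDS : clear implicits.

From Pilot Require Import Defs.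
From HB Require Import structures.
From mathcomp Require Import all_boot all_order all_algebra.
From mathcomp Require Import all_classical all_reals all_analysis.
From mathcomp Require Import zify.
Set Implicit Arguments.
Unset Strict Implicit.
Unset Printing Implicit Defensive.
Local Open Scope classical_set_scope.
Local Open Scope nat_scope.

(* Composing the doublings x (+) x = min(1, 2x) and x (.) x = max(0, 2x - 1) of PL_n along the
   binary digits of a well-chosen k yields, for every threshold i, a unary term tau_i with
   tau_i(x) = 1 if x >= i/n and 0 otherwise.  Lattice combinations of the tau_i take only the
   values 0 and 1 in PL_n, so by the identities of PL_n they are oplus-idempotent in every A in
   PMV_n, and every identity between them that holds in PL_n holds in A.  Hence a homomorphism
   u : A -> PL_n is recovered from its restriction to S(A) via u(a) >= i/n <-> u(tau_i a) = 1;
   conversely a lattice homomorphism f : S(A) -> 2 extends to a |-> max {i/n | f(tau_i a)}, which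
   preserves the operations because tau_i(x op y) is a lattice combination of the tau_j(x) and
   tau_j(y).  Both maps read finitely many coordinates at a time, hence are continuous for the
   product topologies. *)

Section PLArithmetic.
Variable n : nat.

Lemma PL_le (x : 'I_n.+1) : x <= n.
Proof. by rewrite -ltnS. Qed.

Lemma PL_minE (x y : 'I_n.+1) : nat_of_ord (@pmin (PL n) x y) = minn x y.
Proof. by rewrite /= inordK // ltnS; have := PL_le x; lia. Qed.

Lemma PL_maxE (x y : 'I_n.+1) : nat_of_ord (@pmax (PL n) x y) = maxn x y.
Proof. by rewrite /= inordK // ltnS; have := PL_le x; have := PL_le y; lia. Qed.

Lemma PL_odotE (x y : 'I_n.+1) : nat_of_ord (@podot (PL n) x y) = x + y - n.
Proof. by rewrite /= inordK // ltnS; have := PL_le x; have := PL_le y; lia. Qed.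

Lemma PL_oplusE (x y : 'I_n.+1) : nat_of_ord (@poplus (PL n) x y) = minn n (x + y).
Proof. by rewrite /= inordK // ltnS geq_minl. Qed.

Lemma PL_zeroE : nat_of_ord (pzero (PL n) : 'I_n.+1) = 0.
Proof. by rewrite /= inordK. Qed.

Lemma PL_oneE : nat_of_ord (pone (PL n) : 'I_n.+1) = n.
Proof. by rewrite /= inordK. Qed.

Lemma thresholds_eq x y : x <= n -> y <= n ->
  (forall i, 0 < i -> i <= n -> (i <= x) = (i <= y)) -> x = y.
Proof.
move=> x_le y_le xy; apply/anti_leq/andP; split.
  by case: (posnP x) => [-> //|x_gt0]; rewrite -xy.
by case: (posnP y) => [-> //|y_gt0]; rewrite xy.
Qed.

Lemma leq_odot_has i x y : 0 < i -> x <= n -> y <= n ->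
  (i <= x + y - n) = has (fun j => (j <= x) && (n + i - j <= y)) (iota 0 n.+1).
Proof.
move=> i_gt0 x_le y_le; apply/idP/hasP => [ixy|[j]]; last by rewrite mem_iota; lia.
by exists x; rewrite ?mem_iota //=; lia.
Qed.

Lemma leq_oplus_has i x y : i <= n -> x <= n -> y <= n ->
  (i <= minn n (x + y)) = has (fun j => (j <= x) && (i - j <= y)) (iota 0 n.+1).
Proof.
move=> i_le x_le y_le; apply/idP/hasP => [ixy|[j]]; last by lia.
by exists (minn x i); rewrite ?mem_iota //=; lia.
Qed.

End PLArithmetic.

Lemma PMV_identity n (A : pmvSig) (s t : term) : in_PMV n A ->
  (forall e : nat -> PL n,
     nat_of_ord (Defs.eval e s : 'I_n.+1) = nat_of_ord (Defs.eval e t : 'I_n.+1)) ->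
  forall e : nat -> A, Defs.eval e s = Defs.eval e t.
Proof. by move=> hA st; apply: hA => e; apply: val_inj; exact: st. Qed.

Lemma hom_eval (A B : pmvSig) (h : A -> B) (e : nat -> A) (t : term) :
  is_hom h -> h (Defs.eval e t) = Defs.eval (h \o e) t.
Proof.
case=> hmin [hmax [hodot [hoplus [h0 h1]]]].
by elim: t => //= s IHs t IHt; rewrite ?hmin ?hmax ?hodot ?hoplus IHs IHt.
Qed.

Fixpoint dbl_term (m k : nat) (t : term) : term :=
  if m is m'.+1 then
    let s := dbl_term m' k./2 t in if odd k then tOdot s s else tOplus s s
  else t.

Lemma dbl_termE n (e : nat -> PL n) m k t : k < 2 ^ m ->
  nat_of_ord (Defs.eval e (dbl_term m k t) : 'I_n.+1)
  = minn n (2 ^ m * Defs.eval e t - k * n).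
Proof.
elim: m k => [|m IH] k /=.
  by rewrite expn0 ltnS leqn0 => /eqP ->; have := PL_le (Defs.eval e t : 'I_n.+1); lia.
move=> k_lt.
have k2_lt : k./2 < 2 ^ m by have := odd_double_half k; rewrite expnS in k_lt; lia.
have kn : k * n = odd k * n + 2 * (k./2 * n).
  by rewrite -{1}(odd_double_half k) -muln2 mulnDl mulnAC [2 * _]mulnC.
rewrite kn expnS -mulnA.
case: (odd k); [rewrite PL_odotE | rewrite PL_oplusE]; rewrite IH //;
  set x := 2 ^ m * _; set y := k./2 * n; lia.
Qed.

(* The least k with 2^(n+1) (i-1) <= k n; then 2^(n+1) x - k n is <= 0 for x < i
   and >= n for x >= i. *)
Definition step_index (n i : nat) : nat := (2 ^ n.+1 * i.-1 + n.-1) %/ n.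

Lemma step_index_bounds n i : 0 < n -> 0 < i -> i <= n ->
  [/\ 2 ^ n.+1 * i.-1 <= step_index n i * n,
      (step_index n i).+1 * n <= 2 ^ n.+1 * i
    & step_index n i < 2 ^ n.+1].
Proof.
move=> n_gt0 i_gt0 i_le.
have two_n : 2 * n <= 2 ^ n.+1 by rewrite expnS leq_mul2l ltnW // ltn_expl.
have := divn_eq (2 ^ n.+1 * i.-1 + n.-1) n; have := ltn_pmod (2 ^ n.+1 * i.-1 + n.-1) n_gt0.
rewrite -/(step_index n i); set k := step_index n i; set r := _ %% n => r_lt kE.
have iE : 2 ^ n.+1 * i = 2 ^ n.+1 * i.-1 + 2 ^ n.+1 by rewrite -mulnSr prednK.
have i_n : 2 ^ n.+1 * i <= 2 ^ n.+1 * n by rewrite leq_mul2l i_le orbT.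
split; [lia | rewrite mulSn; lia |].
rewrite ltnNge; apply/negP => k_ge.
have : 2 ^ n.+1 * n <= k * n by rewrite leq_mul2r k_ge orbT.
lia.
Qed.

Definition step_term (n i : nat) (t : term) : term :=
  if i == 0 then tOne else if n < i then tZero
  else dbl_term n.+1 (step_index n i) t.

Lemma step_termE n (e : nat -> PL n) i t : 0 < n ->
  nat_of_ord (Defs.eval e (step_term n i t) : 'I_n.+1)
  = if i <= nat_of_ord (Defs.eval e t : 'I_n.+1) then n else 0.
Proof.
move=> n_gt0; have := PL_le (Defs.eval e t : 'I_n.+1).
rewrite /step_term; set x := nat_of_ord _ => x_le.
case: posnP => [->|i_gt0]; first exact: PL_oneE.
case: ltnP => [n_lt|i_le]; first by rewrite PL_zeroE; case: leqP => //; lia.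
have [lo hi k_lt] := step_index_bounds n_gt0 i_gt0 i_le.
rewrite dbl_termE // -/x; case: ifP => xi.
  have : 2 ^ n.+1 * i <= 2 ^ n.+1 * x by rewrite leq_mul2l xi orbT.
  rewrite mulSn in hi; lia.
have : 2 ^ n.+1 * x <= 2 ^ n.+1 * i.-1 by rewrite leq_mul2l; apply/orP; right; lia.
lia.
Qed.

Definition step (A : pmvSig) (n i : nat) (a : A) : A :=
  Defs.eval (fun=> a) (step_term n i (tVar 0)).

Lemma eval_step_term (A : pmvSig) n i (e : nat -> A) t :
  Defs.eval e (step_term n i t) = step n i (Defs.eval e t).
Proof.
rewrite /step /step_term; case: eqP => // _; case: ltnP => // _.
by elim: n.+1 (step_index n i) => //= m IH k; case: (odd k); rewrite /= IH.
Qed.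

Lemma step_PL n i (x : 'I_n.+1) : 0 < n ->
  nat_of_ord (@step (PL n) n i x : 'I_n.+1) = if i <= x then n else 0.
Proof. exact: step_termE. Qed.

Lemma hom_step (A B : pmvSig) (h : A -> B) n i (a : A) :
  is_hom h -> h (step n i a) = step n i (h a).
Proof. exact: hom_eval. Qed.

Lemma step1_idem (A : pmvSig) n (a : A) : 0 < n -> poplus a a = a -> step n 1 a = a.
Proof.
move=> n_gt0 a_idem.
have idx0 : step_index n 1 = 0 by rewrite /step_index muln0 divn_small // ltn_predL.
rewrite /step /step_term ltnNge n_gt0 idx0.
by elim: n.+1 => //= m ->.
Qed.

(* Lattice combinations of the threshold functions [step n i] of variables.  Their values in PL_n
   are 0 or 1, so they evaluate into the skeleton of every algebra of PMV_n. *)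
Inductive bterm :=
  | bStep of nat & nat
  | bAnd of bterm & bterm
  | bOr of bterm & bterm
  | bTop
  | bBot.

Fixpoint bterm_term (n : nat) (s : bterm) : term :=
  match s with
  | bStep i k => step_term n i (tVar k)
  | bAnd s1 s2 => tMin (bterm_term n s1) (bterm_term n s2)
  | bOr s1 s2 => tMax (bterm_term n s1) (bterm_term n s2)
  | bTop => tOne
  | bBot => tZero
  end.

Fixpoint bsem_PL n (e : nat -> PL n) (s : bterm) : bool :=
  match s with
  | bStep i k => i <= nat_of_ord (e k : 'I_n.+1)
  | bAnd s1 s2 => bsem_PL e s1 && bsem_PL e s2
  | bOr s1 s2 => bsem_PL e s1 || bsem_PL e s2
  | bTop => true
  | bBot => false
  end.

Definition bOrs (F : nat -> bterm) (l : seq nat) : bterm :=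
  foldr (fun j s => bOr (F j) s) bBot l.

Lemma bsem_PL_bOrs n (e : nat -> PL n) F l :
  bsem_PL e (bOrs F l) = has (fun j => bsem_PL e (F j)) l.
Proof. by elim: l => //= j l ->. Qed.

Lemma bterm_termE n (e : nat -> PL n) s : 0 < n ->
  nat_of_ord (Defs.eval e (bterm_term n s) : 'I_n.+1) = if bsem_PL e s then n else 0.
Proof.
move=> n_gt0; elim: s => [i k|s1 IH1 s2 IH2|s1 IH1 s2 IH2||] /=.
- exact: step_termE.
- by rewrite PL_minE IH1 IH2; case: bsem_PL; case: bsem_PL; rewrite /= ?minnn ?minn0 ?min0n.
- by rewrite PL_maxE IH1 IH2; case: bsem_PL; case: bsem_PL; rewrite /= ?maxnn ?maxn0 ?max0n.
- exact: PL_oneE.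
- exact: PL_zeroE.
Qed.

Lemma skel_inj (A : pmvSig) : injective (@sval A (fun a => poplus a a = a)).
Proof.
by move=> [a a_idem] [b b_idem] /= ab; subst b; rewrite (Prop_irrelevance a_idem b_idem).
Qed.

Section Skeleton.
Variables (n : nat) (A : pmvSig).
Hypotheses (n_gt0 : 0 < n) (hA : in_PMV n A).

Lemma bterm_idem (e : nat -> A) s :
  poplus (Defs.eval e (bterm_term n s)) (Defs.eval e (bterm_term n s))
  = Defs.eval e (bterm_term n s).
Proof.
set t := bterm_term n s; apply: (@PMV_identity n A (tOplus t t) t hA) => e' /=.
by rewrite PL_oplusE /t bterm_termE //; case: bsem_PL; lia.
Qed.

Definition skel_bterm (e : nat -> A) s : skel A := exist _ _ (bterm_idem e s).

Definition skel_step i (a : A) : skel A := skel_bterm (fun=> a) (bStep i 0).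

Lemma restr_step (u : A -> PL n) i a : is_hom u ->
  restr n A u (skel_step i a) = (i <= nat_of_ord (u a : 'I_n.+1)).
Proof.
move=> u_hom; rewrite /restr -val_eqE /= (hom_step _ _ _ u_hom) step_PL //.
by case: ifP => _; rewrite ?eqxx // eq_sym gtn_eqF.
Qed.

Lemma restr_skel_step1 (u : A -> PL n) (z : skel A) :
  restr n A u z = restr n A u (skel_step 1 (sval z)).
Proof. by rewrite /restr [sval (skel_step _ _)]step1_idem //; case: z. Qed.

Lemma restr_DLhom (u : A -> PL n) : is_hom u -> is_DLhom (restr n A u).
Proof.
move=> [hmin [hmax [_ [_ [h0 h1]]]]].
split=> [x y z|x y z|z|z]; rewrite /restr => ->; rewrite -!val_eqE /=.
- by rewrite hmin PL_minE; have := PL_le (u (sval x)); have := PL_le (u (sval y)); lia.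
- by rewrite hmax PL_maxE; have := PL_le (u (sval x)); have := PL_le (u (sval y)); lia.
- by rewrite h0 PL_zeroE eq_sym gtn_eqF.
- by rewrite h1 PL_oneE eqxx.
Qed.

Lemma restr_inj (u v : A -> PL n) : is_hom u -> is_hom v ->
  restr n A u =1 restr n A v -> u = v.
Proof.
move=> u_hom v_hom uv; apply: funext => a; apply/val_inj/eqP.
have := uv (skel_step (u a) a); have := uv (skel_step (v a) a).
by rewrite !restr_step // !leqnn eqn_leq => -> <-.
Qed.

Lemma restr_le (u v : A -> PL n) : is_hom u -> is_hom v ->
  leDn n A u v <-> leDS A (restr n A u) (restr n A v).
Proof.
move=> u_hom v_hom; split=> [uv z|uv a].
  rewrite [restr n A u z]restr_skel_step1 [restr n A v z]restr_skel_step1 !restr_step //.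
  by apply/implyP => /leq_trans; apply.
by have := uv (skel_step (u a) a); rewrite !restr_step // leqnn.
Qed.

Section Extension.
Variable f : skel A -> bool.
Hypothesis f_DL : is_DLhom f.

Fixpoint bsem (e : nat -> A) (s : bterm) : bool :=
  match s with
  | bStep i k => f (skel_step i (e k))
  | bAnd s1 s2 => bsem e s1 && bsem e s2
  | bOr s1 s2 => bsem e s1 || bsem e s2
  | bTop => true
  | bBot => false
  end.

Lemma f_skel (z z' : skel A) : sval z = sval z' -> f z = f z'.
Proof. by move/skel_inj ->. Qed.

Lemma skel_bterm_bsem e s : f (skel_bterm e s) = bsem e s.
Proof.
case: f_DL => f_meet f_join f0 f1.
elim: s => [i k|s1 IH1 s2 IH2|s1 IH1 s2 IH2||] /=.
- by apply: f_skel; rewrite /= eval_step_term.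
- by rewrite -IH1 -IH2; apply: f_meet.
- by rewrite -IH1 -IH2; apply: f_join.
- exact: f1.
- exact: f0.
Qed.

Lemma step_transfer i t D :
  (forall e : nat -> PL n, (i <= nat_of_ord (Defs.eval e t : 'I_n.+1)) = bsem_PL e D) ->
  forall e : nat -> A, f (skel_step i (Defs.eval e t)) = bsem e D.
Proof.
move=> tD e; rewrite -skel_bterm_bsem; apply: f_skel => /=.
rewrite -[LHS]/(step n i (Defs.eval e t)) -eval_step_term.
apply: (@PMV_identity n A (step_term n i t) _ hA) => e'.
by rewrite step_termE // bterm_termE // tD.
Qed.

Lemma skel_step_antitone i j a : j <= i -> f (skel_step i a) -> f (skel_step j a).
Proof.
move=> ji; rewrite (@step_transfer i (tVar 0) (bAnd (bStep i 0) (bStep j 0))) => [/andP[]//|e].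
by rewrite /=; case: leqP => // ix; rewrite (leq_trans ji ix).
Qed.

Lemma skel_step0 a : f (skel_step 0 a).
Proof. by rewrite (@step_transfer 0 (tVar 0) bTop). Qed.

Lemma skel_step_gt i a : n < i -> f (skel_step i a) = false.
Proof.
move=> n_lt; rewrite (@step_transfer i (tVar 0) bBot) // => e.
by apply/negbTE; rewrite -ltnNge (leq_ltn_trans (PL_le _)).
Qed.

Definition extend (a : A) : PL n :=
  arg_max ord0 (fun i : 'I_n.+1 => f (skel_step i a)) val.

Lemma extend_step i a : f (skel_step i a) = (i <= nat_of_ord (extend a : 'I_n.+1)).
Proof.
rewrite /extend; case: arg_maxnP; first exact: skel_step0.
move=> m fm m_max; have m_le := PL_le m.
apply/idP/idP => [fi|im]; last exact: skel_step_antitone fm.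
have [i_le|n_lt] := leqP i n; last by rewrite skel_step_gt in fi.
exact: (m_max (Ordinal (i_le : i < n.+1))).
Qed.

Lemma extend_eq a (w : 'I_n.+1) :
  (forall i, 0 < i -> i <= n -> f (skel_step i a) = (i <= w)) -> extend a = w.
Proof.
move=> fw; apply: val_inj; apply: thresholds_eq (PL_le _) (PL_le _) _ => i i_gt0 i_le.
by rewrite -extend_step fw.
Qed.

Lemma bsem_extend e s : bsem e s = bsem_PL (extend \o e) s.
Proof. by elim: s => [i k|s1 IH1 s2 IH2|s1 IH1 s2 IH2||] //=; rewrite ?IH1 ?IH2 ?extend_step. Qed.

Lemma extend_eval t (D : nat -> bterm) :
  (forall i, 0 < i -> i <= n -> forall e : nat -> PL n,
     (i <= nat_of_ord (Defs.eval e t : 'I_n.+1)) = bsem_PL e (D i)) ->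
  forall e : nat -> A, extend (Defs.eval e t) = Defs.eval (extend \o e) t.
Proof.
move=> tD e; apply: extend_eq => i i_gt0 i_le.
by rewrite (step_transfer (tD i i_gt0 i_le)) bsem_extend -tD.
Qed.

Lemma extend_hom : is_hom extend.
Proof.
pose env2 (a b : A) k := if k is 0 then a else b.
split; [|split; [|split; [|split; [|split]]]].
- move=> a b; apply: (extend_eval (t := tMin (tVar 0) (tVar 1))
    (D := fun i => bAnd (bStep i 0) (bStep i 1))) (env2 a b).
  by move=> i _ _ e; rewrite PL_minE leq_min.
- move=> a b; apply: (extend_eval (t := tMax (tVar 0) (tVar 1))
    (D := fun i => bOr (bStep i 0) (bStep i 1))) (env2 a b).
  by move=> i _ _ e; rewrite PL_maxE leq_max.
- move=> a b; apply: (extend_eval (t := tOdot (tVar 0) (tVar 1))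
    (D := fun i => bOrs (fun j => bAnd (bStep j 0) (bStep (n + i - j) 1)) (iota 0 n.+1)))
    (env2 a b).
  by move=> i i_gt0 _ e; rewrite PL_odotE bsem_PL_bOrs leq_odot_has ?PL_le.
- move=> a b; apply: (extend_eval (t := tOplus (tVar 0) (tVar 1))
    (D := fun i => bOrs (fun j => bAnd (bStep j 0) (bStep (i - j) 1)) (iota 0 n.+1)))
    (env2 a b).
  by move=> i _ i_le e; rewrite PL_oplusE bsem_PL_bOrs leq_oplus_has ?PL_le.
- apply: (extend_eval (t := tZero) (D := fun=> bBot)) (fun=> pzero A) => i i_gt0 _ e.
  by rewrite PL_zeroE leqNgt i_gt0.
- apply: (extend_eval (t := tOne) (D := fun=> bTop)) (fun=> pzero A) => i _ i_le e.
  by rewrite PL_oneE i_le.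
Qed.

Lemma restr_extend : restr n A extend = f.
Proof.
apply: funext => z; rewrite restr_skel_step1 restr_step; last exact: extend_hom.
by rewrite -extend_step; apply: f_skel; rewrite [LHS]step1_idem //; case: z.
Qed.

End Extension.
End Skeleton.

Lemma near_ptws (U : Type) (V : discreteTopologicalType) (f : {ptws U -> V}) u :
  \forall g \near f, g u = f u.
Proof.
have /cvg_sup/(_ u) f_u := @cvg_id _ (nbhs f).
exact: (f_u _ (@initial_continuous _ V (fun g : U -> V => g u) f _ (discrete_set1 (f u)))).
Qed.

Lemma continuous_ptws_discrete (X : topologicalType) (U : Type) (V : discreteTopologicalType)
    (h : X -> {ptws U -> V}) :
  (forall x u, \forall y \near x, h y u = h x u) -> continuous h.
Proof.
move=> h_loc x; apply/cvg_sup => u A.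
rewrite nbhsE => -[B [[C Cop <-] Bh] sBA].
apply: (@filterS _ (nbhs x) _ _ _ _ (h_loc x u)) => y hy.
by apply: sBA; rewrite /= hy.
Qed.

Lemma restr_continuous n (A : pmvSig) : continuous (restr n A).
Proof.
apply: continuous_ptws_discrete => u z.
apply: (@filterS _ (nbhs u) _ _ _ _ (near_ptws u (sval z))) => v /= vu.
by rewrite /restr vu.
Qed.

Lemma extend_continuous n (A : pmvSig) (n_gt0 : 0 < n) (hA : in_PMV n A) :
  continuous (fun f : DSpace A => extend n_gt0 hA f : DnSpace n A).
Proof.
apply: continuous_ptws_discrete => f a.
have near_f : \forall g \near f, forall i : 'I_n.+1,
    g (skel_step n_gt0 hA i a) = f (skel_step n_gt0 hA i a).
  by apply: (filter_forall (nbhs_filter f)) => i; exact: near_ptws.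
apply: (@filterS _ (nbhs f) _ _ _ _ near_f) => g /= gf; rewrite /extend.
by congr arg_max; apply: funext => i; exact: gf.
Qed.

Local Close Scope nat_scope.

Theorem theorem4p4 (n : nat) (hn : (1 <= n)%N) :
  (forall A : pmvSig, in_PMV n A ->
     [/\ set_bij (Dn n A) (DS A) (restr n A),
         (forall u v, Dn n A u -> Dn n A v ->
            (leDn n A u v <-> leDS A (restr n A u) (restr n A v))),
         {within Dn n A, continuous (restr n A)}
       & exists g : DSpace A -> DnSpace n A,
           [/\ {within DS A, continuous g},
               (forall u, Dn n A u -> g (restr n A u) = u)
             & (forall f, DS A f -> restr n A (g f) = f)]])
  /\
  (forall (A B : pmvSig) (h : A -> B), in_PMV n A -> in_PMV n B ->
     is_hom h ->
     forall v : DnSpace n B, Dn n B v ->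
     forall (s : skel A) (t : skel B), sval t = h (sval s) ->
       restr n A (v \o h : DnSpace n A) s = restr n B v t).
Proof.
split; last by move=> A B h _ _ _ v _ s t st; rewrite /restr st.
move=> A hA; have n_gt0 : (0 < n)%N := hn.
have extend_restr u : Dn n A u -> extend n_gt0 hA (restr n A u) = u.
  move=> u_hom; have restr_DL := restr_DLhom n_gt0 u_hom.
  apply: (restr_inj n_gt0 hA (extend_hom n_gt0 hA restr_DL) u_hom) => z.
  by rewrite restr_extend.
split.
- split.
  + by move=> u; apply: restr_DLhom.
  + by move=> u v; rewrite !inE => u_hom v_hom uv; rewrite -(extend_restr u) // uv extend_restr.
  + by move=> f f_DL; exists (extend n_gt0 hA f); [exact: extend_hom | exact: restr_extend].
- by move=> u v; apply: restr_le.
- exact/continuous_subspaceT/restr_continuous.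
- exists (fun f => extend n_gt0 hA f); split => //.
  + exact/continuous_subspaceT/extend_continuous.
  + by move=> f; apply: restr_extend.
Qed.
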